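(* Let $\omega$ be a lower semicontinuous weight on $\mathcal{A}$ such that $\omega\circ\alpha_t=\omega$ for all $t\in\mathbb{R}$, $\omega(E_n^2)<\infty$ for all $n\in\mathbb{N}$, and $\omega(x)=\lim_{n\to\infty}\omega(E_nxE_n)$ for all $x\in\mathcal{A}_+$. Then $\omega$ is a $\beta$-KMS weight for $\alpha$ if and only if $$\omega(E_na^*E_m^2aE_n)=\omega\big(E_m\alpha_{-i\beta/2}(a)E_n^2\alpha_{-i\beta/2}(a)^*E_m\big)$$ for all $a\in D(\alpha_{-i\beta/2})$ and all $n,m\in\mathbb{N}$.
   Context: Standing setup: $\mathcal{A}$ is a separable $C^{*}$-algebra, $\alpha=\{\alpha_t\}_{t\in\mathbb{R}}$ a continuous one-parameter group of automorphisms, $\beta\in\mathbb{R}$, and $\{E_n\}_{n\in\mathbb{N}}$ is an approximate identity for $\mathcal{A}$ with $\alpha_t(E_n)=E_n$ for all $t,n$ and $E_nE_m=E_n$ whenever $m>n$. For $z\in\mathbb{C}$, $D(\alpha_z)$ is the set of $a$ for which there is a continuous $f$ on the closed strip between $\operatorname{Im}=0$ and $\operatorname{Im}=\operatorname{Im}z$, analytic in its interior, with $f(t)=\alpha_t(a)$, $t\in\mathbb{R}$; $\alpha_z(a)=f(z)$. A weight is an additive, positively homogeneous map $\mathcal{A}_+\to[0,\infty]$; proper means densely defined and lower semicontinuous. A $\beta$-KMS weight is a proper weight $\psi$ with $\psi\circ\alpha_t=\psi$ and $\psi(a^*a)=\psi(\alpha_{-i\beta/2}(a)\alpha_{-i\beta/2}(a)^*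 )$ for all $a\in D(\alpha_{-i\beta/2})$ (zero weight allowed). *)

From HB Require Import structures.
From mathcomp Require Import all_boot all_order all_algebra.
From mathcomp Require Import all_classical all_reals all_analysis.
From mathcomp.real_closed Require Import complex.
Import Order.TTheory GRing.Theory Num.Theory.
Import numFieldNormedType.Exports.

Set Implicit Arguments.
Unset Strict Implicit.
Unset Printing Implicit Defensive.

Local Open Scope ring_scope.
Local Open Scope classical_set_scope.

Definition Cstar_algebra (R : realType) (A : completeNormedModType R[i])
    (mul : A -> A -> A) (star : A -> A) : Prop :=
  [/\ (forall x y z, mul x (mul y z) = mul (mul x y) z),
      (forall x y z, mul x (y + z) = mul x y + mul x z),
      (forall x y z, mul (x + y) z = mul x z + mul y z),
      (forall (c : R[i]) x y, mul (c *: x) y = c *: mul x y /\ mul x (c *: y) = c *: mul x y) &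
      (forall x, `|mul (star x) x| = `|x| ^+ 2)] /\
  [/\ (forall x y, star (x + y) = star x + star y),
      (forall (c : R[i]) x, star (c *: x) = (c^*)%C *: star x),
      (forall x, star (star x) = x),
      (forall x y, star (mul x y) = mul (star y) (star x)) &
      (forall x y, `|mul x y| <= `|x| * `|y|)].

Definition separable (T : topologicalType) : Prop :=
  exists D : set T, countable D /\ closure D = setT.

Definition pos_cone (A : Type) (mul : A -> A -> A) (star : A -> A) : set A :=
  [set x | exists a, x = mul (star a) a].

Definition star_automorphism (R : realType) (A : completeNormedModType R[i])
    (mul : A -> A -> A) (star : A -> A) (f : A -> A) : Prop :=
  [/\ bijective f,
      (forall x y, f (x + y) = f x + f y),
      (forall (c : R[i]) x, f (c *: x) = c *: f x),
      (forall x y, f (mul x y) = mul (f x) (f y)) &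
      (forall x, f (star x) = star (f x))].

Definition one_param_group (R : realType) (A : completeNormedModType R[i])
    (mul : A -> A -> A) (star : A -> A) (alpha : R -> A -> A) : Prop :=
  [/\ (forall t, star_automorphism mul star (alpha t)),
      (forall x, alpha 0 x = x),
      (forall s t x, alpha (s + t) x = alpha s (alpha t x)) &
      (forall x, continuous (fun t : R => alpha t x))].

Definition approx_identity (R : realType) (A : completeNormedModType R[i])
    (mul : A -> A -> A) (star : A -> A) (E : nat -> A) : Prop :=
  [/\ (forall n, pos_cone mul star (E n)),
      (forall n, `|E n| <= 1) &
      (forall a, (fun n => mul (E n) a) @ \oo --> a /\
                 (fun n => mul a (E n)) @ \oo --> a)].

Definition strip (R : realType) (z : R[i]) : set R[i]^o :=
  [set w | Num.min 0 (complex.Im z) <= complex.Im w <= Num.max 0 (complex.Im z)].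
Definition open_strip (R : realType) (z : R[i]) : set R[i]^o :=
  [set w | Num.min 0 (complex.Im z) < complex.Im w < Num.max 0 (complex.Im z)].

Definition complex_differentiable (R : realType) (A : completeNormedModType R[i])
    (f : R[i]^o -> A) (w : R[i]) : Prop :=
  exists L : A,
    (fun h : R[i] => h^-1 *: (f (w + h) - f w)) @ (0 : R[i]^o)^' --> L.

(* [alpha_ext alpha z a b] : a \in D(alpha_z) and alpha_z(a) = b, i.e. there *)
(* is f continuous on the closed strip, analytic in its interior, with      *)
(* f(t) = alpha_t(a) for real t and f(z) = b.                               *)
Definition alpha_ext (R : realType) (A : completeNormedModType R[i])
    (alpha : R -> A -> A) (z : R[i]) (a b : A) : Prop :=
  exists f : R[i]^o -> A,
    [/\ {within strip z, continuous f},
        (forall w, open_strip z w -> complex_differentiable f w),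
        (forall t : R, f (t%:C)%C = alpha t a) &
        f z = b].

Definition weight (R : realType) (A : completeNormedModType R[i])
    (mul : A -> A -> A) (star : A -> A) (psi : A -> \bar R) : Prop :=
  [/\ (forall x, pos_cone mul star x -> (0 <= psi x)%E),
      (forall x y, pos_cone mul star x -> pos_cone mul star y ->
                   psi (x + y) = (psi x + psi y)%E) &
      (forall (t : R) x, 0 <= t -> pos_cone mul star x ->
                   psi ((t%:C)%C *: x) = (t%:E * psi x)%E)].

Definition weight_lsc (R : realType) (A : completeNormedModType R[i])
    (mul : A -> A -> A) (star : A -> A) (psi : A -> \bar R) : Prop :=
  forall r : R, closed [set x | pos_cone mul star x /\ (psi x <= r%:E)%E].

Definition densely_defined (R : realType) (A : completeNormedModType R[i])
    (mul : A -> A -> A) (star : A -> A) (psi : A -> \bar R) : Prop :=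
  pos_cone mul star `<=`
    closure [set x | pos_cone mul star x /\ (psi x < +oo)%E].

Definition proper_weight (R : realType) (A : completeNormedModType R[i])
    (mul : A -> A -> A) (star : A -> A) (psi : A -> \bar R) : Prop :=
  [/\ weight mul star psi, densely_defined mul star psi & weight_lsc mul star psi].

Definition KMS_weight (R : realType) (A : completeNormedModType R[i])
    (mul : A -> A -> A) (star : A -> A) (alpha : R -> A -> A) (beta : R)
    (psi : A -> \bar R) : Prop :=
  [/\ proper_weight mul star psi,
      (forall t x, pos_cone mul star x -> psi (alpha t x) = psi x) &
      (forall a b, alpha_ext alpha (- (beta / 2) *i)%C a b ->
         psi (mul (star a) a) = psi (mul b (star b)))].

From HB Require Import structures.
From mathcomp Require Import all_boot all_order all_algebra.
From mathcomp Require Import all_classical all_reals all_analysis.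
From mathcomp.real_closed Require Import complex.
From mathcomp Require Import ring lra.
Import Order.TTheory GRing.Theory Num.Theory.
Import numFieldNormedType.Exports.
Local Open Scope ring_scope.
Local Open Scope classical_set_scope.

(* Direction "=>" is the KMS condition for [E_m a E_n], which lies in
   D(alpha_{-i beta/2}) with image [E_m b E_n] since alpha fixes every E_k.
   For "<=", put [c_n = a E_n] and [c'_m = b^* E_m] with
   [b = alpha_{-i beta/2}(a)].  Lower semicontinuity, the hypothesis and the
   monotonicity [omega (c^* E_k^2 c) <= omega (c^* c)] give
     omega (c_n^* c_n) <= liminf_m omega (c_n^* E_m^2 c_n)
                        = liminf_m omega (c'_m^* E_n^2 c'_m) <= omega (b b^* ),
   and letting n -> oo yields omega (a^* a) <= omega (b b^* ); the reverse
   inequality is symmetric.  Monotonicity holds because c^* c - c^* y c = d^* d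
   whenever y is self-adjoint with ||y|| < 1: the fixed point w of
   w = (y + w^2) / 2 satisfies 1 - y = (1 - w)^2, and d = c - w c.  The same
   monotonicity bounds omega (E_n x E_n) by a multiple of omega (E_n^2), which
   gives density of the domain. *)

Lemma complex_realE {R : realType} (e : R[i]) :
  complex.Im e = 0 -> e = (complex.Re e)%:C%C.
Proof. by case: e => a b /= ->. Qed.

Section RealNorm.
Context {R : realType} {V : normedModType R[i]}.

(* The norm of [V] takes values in [R[i]]; [rnorm] is its real part, which is
   the whole norm. *)
Definition rnorm (x : V) : R := complex.Re `|x|.

Lemma rnormE x : `|x| = (rnorm x)%:C%C.
Proof.
apply: complex_realE; have := normr_ge0 x.
by rewrite lecE => /andP[/eqP ->].
Qed.

Lemma rnorm_ge0 x : 0 <= rnorm x.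
Proof. by have := normr_ge0 x; rewrite rnormE lecR. Qed.

Lemma rnormD x y : rnorm (x + y) <= rnorm x + rnorm y.
Proof. by have := ler_normD x y; rewrite !rnormE -rmorphD lecR. Qed.

Lemma rnormN x : rnorm (- x) = rnorm x.
Proof. by rewrite /rnorm normrN. Qed.

Lemma rnorm0 : rnorm 0 = 0.
Proof. by rewrite /rnorm normr0. Qed.

Lemma rnormZ (r : R) x : 0 <= r -> rnorm (r%:C%C *: x) = r * rnorm x.
Proof.
by move=> r0; rewrite /rnorm normrZ rnormE ger0_norm ?ler0c // -rmorphM.
Qed.

Lemma cvg_rnormP {T : Type} {F : set_system T} {FF : Filter F} (f : T -> V) l :
  f @ F --> l <-> (fun t => rnorm (l - f t)) @ F --> (0 : R).
Proof.
split => [/cvgrPdist_lt H | H]; apply/cvgrPdist_lt => e.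
- move=> e0; have := H e%:C%C; rewrite ltcR => /(_ e0).
  by apply: filterS => t; rewrite rnormE ltcR sub0r normrN ger0_norm ?rnorm_ge0.
- rewrite ltcE /= => /andP[/eqP /complex_realE -> e0].
  move/cvgrPdist_lt: H => /(_ _ e0); apply: filterS => t.
  by rewrite sub0r normrN ger0_norm ?rnorm_ge0 // rnormE ltcR.
Qed.

Lemma cvg_rnorm_le {T : Type} {F : set_system T} {FF : Filter F}
    (f : T -> V) l (h : T -> R) :
  h @ F --> (0 : R) -> (\forall t \near F, rnorm (l - f t) <= h t) -> f @ F --> l.
Proof.
move=> h0 H; apply/cvg_rnormP; apply: (squeeze_cvgr _ (cvg_cst 0) h0).
by apply: filterS H => t ->; rewrite rnorm_ge0.
Qed.

Lemma cvg_lim_eq {T : Type} {F : set_system T} {FF : ProperFilter F}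
    {f : T -> V} {l l' : V} :
  f @ F --> l -> f @ F --> l' -> l = l'.
Proof. exact: (cvg_unique (@norm_hausdorff _ V)). Qed.

End RealNorm.

Lemma cvgn_geometric_increments {R : realType} {V : completeNormedModType R[i]}
    (u : nat -> V) (q : R) :
  0 <= q < 1 -> (forall k, rnorm (u k.+1 - u k) <= q ^+ k) -> cvgn u.
Proof.
case/andP=> q0 q1 du; have q1' : 0 < 1 - q by lra.
have tail m j : rnorm (u (m + j)%N - u m) <= (q ^+ m - q ^+ (m + j)%N) / (1 - q).
  elim: j => [|j IH]; first by rewrite addn0 !subrr rnorm0 mul0r.
  rewrite addnS -(subrK (u (m + j)) (u (m + j).+1)) -addrA.
  apply: le_trans (rnormD _ _) _.
  have -> : (q ^+ m - q ^+ (m + j).+1) / (1 - q) =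
            q ^+ (m + j)%N + (q ^+ m - q ^+ (m + j)%N) / (1 - q).
    by rewrite exprS; field; lra.
  exact: lerD (du _) IH.
apply/cauchy_cvgP/cauchy_exP => e; rewrite ltcE /= => /andP[/eqP Ie e0].
have : geometric (1 - q)^-1 q @ \oo --> (0 : R) by apply: cvg_geometric; rewrite ger0_norm.
move/cvgrPdist_lt => /(_ _ e0)[N _ qN]; move: {qN}(qN N (leqnn N)).
rewrite /= sub0r normrN ger0_norm; last by rewrite mulr_ge0 ?invr_ge0 ?exprn_ge0 // ltW.
move=> qN; exists (u N), N => // n /= Nn.
rewrite -ball_normE /= rnormE -rnormN opprB (complex_realE _ Ie) ltcR.
have := tail N (n - N)%N; rewrite subnKC // => /le_lt_trans; apply.
apply: le_lt_trans qN; rewrite mulrC ler_pM2l ?invr_gt0 // gerBl exprn_ge0 //.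
Qed.

Section CstarAlgebra.
Context {R : realType} {A : completeNormedModType R[i]}
  {mul : A -> A -> A} {star : A -> A}.
Hypothesis HA : Cstar_algebra mul star.

Lemma cmulA x y z : mul x (mul y z) = mul (mul x y) z.
Proof. by case: HA => -[]. Qed.
Lemma cmulDr x y z : mul x (y + z) = mul x y + mul x z.
Proof. by case: HA => -[]. Qed.
Lemma cmulDl x y z : mul (x + y) z = mul x z + mul y z.
Proof. by case: HA => -[]. Qed.
Lemma cmulZl c x y : mul (c *: x) y = c *: mul x y.
Proof. by case: HA => -[] _ _ _ /(_ c x y)[]. Qed.
Lemma cmulZr c x y : mul x (c *: y) = c *: mul x y.
Proof. by case: HA => -[] _ _ _ /(_ c x y)[]. Qed.
Lemma starD x y : star (x + y) = star x + star y.
Proof. by case: HA => _ []. Qed.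
Lemma starZ c x : star (c *: x) = (c^*)%C *: star x.
Proof. by case: HA => _ []. Qed.
Lemma starK x : star (star x) = x.
Proof. by case: HA => _ []. Qed.
Lemma starM x y : star (mul x y) = mul (star y) (star x).
Proof. by case: HA => _ []. Qed.
Lemma rnorm_mul x y : rnorm (mul x y) <= rnorm x * rnorm y.
Proof. by case: HA => _ [] _ _ _ _ /(_ x y); rewrite !rnormE -rmorphM lecR. Qed.

Lemma cmulNl x y : mul (- x) y = - mul x y.
Proof. by rewrite -scaleN1r cmulZl scaleN1r. Qed.
Lemma cmulNr x y : mul x (- y) = - mul x y.
Proof. by rewrite -scaleN1r cmulZr scaleN1r. Qed.
Lemma cmulBl x y z : mul (x - y) z = mul x z - mul y z.
Proof. by rewrite cmulDl cmulNl. Qed.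
Lemma cmulBr x y z : mul x (y - z) = mul x y - mul x z.
Proof. by rewrite cmulDr cmulNr. Qed.
Lemma star0 : star 0 = 0.
Proof. by have := starZ 0 0; rewrite !scale0r conjc0 scale0r. Qed.
Lemma starN x : star (- x) = - star x.
Proof. by rewrite -scaleN1r starZ rmorphN1 scaleN1r. Qed.
Lemma starB x y : star (x - y) = star x - star y.
Proof. by rewrite starD starN. Qed.
Lemma starZr (r : R) x : star (r%:C%C *: x) = r%:C%C *: star x.
Proof. by rewrite starZ conjc_real. Qed.

Lemma cmul_sqrB x w : mul x x - mul w w = mul x (x - w) + mul (x - w) w.
Proof. by rewrite cmulBr cmulBl addrA subrK. Qed.

Lemma rnorm_sqrB x w :
  rnorm (mul x x - mul w w) <= (rnorm x + rnorm w) * rnorm (x - w).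
Proof.
rewrite cmul_sqrB mulrDl [rnorm w * _]mulrC; apply: le_trans (rnormD _ _) _.
by apply: lerD; apply: rnorm_mul.
Qed.

(* The C*-identity gives ||x||^2 <= ||x^*|| ||x||. *)
Lemma rnorm_star x : rnorm (star x) = rnorm x.
Proof.
suff le_star y : rnorm y <= rnorm (star y).
  by apply/le_anti; rewrite le_star -{2}[x]starK le_star.
have := rnorm_mul (star y) y; case: HA => -[] _ _ _ _ /(_ y).
rewrite !rnormE -rmorphXn => /complexI ->.
have := rnorm_ge0 y; have := rnorm_ge0 (star y); nra.
Qed.

Lemma continuous_star : continuous star.
Proof.
move=> x; apply: (@cvg_rnorm_le _ _ _ _ _ _ _ (fun v => rnorm (x - v))).
  by apply/cvg_rnormP; exact: cvg_id.
by near=> v; rewrite /= -starB rnorm_star.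
Unshelve. all: by end_near.
Qed.

Lemma continuous_mull p : continuous (mul p).
Proof.
move=> x; apply: (@cvg_rnorm_le _ _ _ _ _ _ _ (fun v => rnorm p * rnorm (x - v))).
  rewrite -(mulr0 (rnorm p)); apply: cvgM (cvg_cst _) _.
  by apply/cvg_rnormP; exact: cvg_id.
by near=> v; rewrite /= -cmulBr rnorm_mul.
Unshelve. all: by end_near.
Qed.

Lemma continuous_mulr q : continuous (mul^~ q).
Proof.
move=> x; apply: (@cvg_rnorm_le _ _ _ _ _ _ _ (fun v => rnorm (x - v) * rnorm q)).
  rewrite -(mul0r (rnorm q)); apply: cvgM _ (cvg_cst _).
  by apply/cvg_rnormP; exact: cvg_id.
by near=> v; rewrite /= -cmulBl rnorm_mul.
Unshelve. all: by end_near.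
Qed.

Fixpoint sqrt_iter (y : A) (k : nat) : A :=
  if k is k'.+1 then (2^-1 : R)%:C%C *: (y + mul (sqrt_iter y k') (sqrt_iter y k'))
  else 0.
Arguments sqrt_iter : simpl never.

Section OneSubSqrt.
Variable y : A.
Hypotheses (y_sa : star y = y) (y_lt1 : rnorm y < 1).

Local Notation z := (sqrt_iter y).
(* The iteration stays in the ball of radius [rho] and is a [rho]-contraction
   there, because rho^2 - 2 rho + ||y|| = (||y|| + 3) (||y|| - 1) / 4 <= 0. *)
Local Notation rho := ((1 + rnorm y) / 2).

Lemma sqrt_iterS k : z k.+1 = (2^-1 : R)%:C%C *: (y + mul (z k) (z k)).
Proof. by []. Qed.

Lemma sqrt_iter_sa k : star (z k) = z k.
Proof.
by elim: k => [|k IH]; rewrite ?star0 // sqrt_iterS starZr starD starM IH y_sa.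
Qed.

Lemma rnorm_sqrt_iter k : rnorm (z k) <= rho.
Proof.
have y0 := rnorm_ge0 y; elim: k => [|k IH]; first by rewrite rnorm0; lra.
rewrite sqrt_iterS rnormZ ?invr_ge0 ?ler0n //.
have zz : rnorm (mul (z k) (z k)) <= rho * rho.
  by apply: le_trans (rnorm_mul _ _) _; apply: ler_pM; rewrite ?rnorm_ge0.
have y1 : rnorm y <= 1 by exact: ltW.
have : 0 <= (1 - rnorm y) * (3 + rnorm y) by apply: mulr_ge0; lra.
have := rnormD y (mul (z k) (z k)); nra.
Qed.

Lemma rnorm_sqrt_iter_step k : rnorm (z k.+1 - z k) <= rho ^+ k.
Proof.
elim: k => [|k IH].
  have y1 : rnorm y <= 1 by exact: ltW.
  by rewrite expr0 subr0; have := rnorm_sqrt_iter 1; lra.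
rewrite [z k.+2]sqrt_iterS sqrt_iterS -scalerBr opprD addrACA subrr add0r.
rewrite rnormZ ?invr_ge0 ?ler0n //.
apply: le_trans (ler_wpM2l _ (rnorm_sqrB _ _)) _; first by rewrite invr_ge0 ler0n.
have rho0 : 0 <= rho by have := rnorm_ge0 y; lra.
have := rnorm_sqrt_iter k.+1; have := rnorm_sqrt_iter k.
have := ler_wpM2l rho0 IH; have := rnorm_ge0 (z k.+1 - z k); rewrite exprS; nra.
Qed.

Lemma cvgn_sqrt_iter : z @ \oo --> limn z.
Proof.
apply: (@cvgn_geometric_increments _ _ _ rho); last exact: rnorm_sqrt_iter_step.
have y1 : rnorm y < 1 by []; have := rnorm_ge0 y.
by move=> y0; apply/andP; split; lra.
Qed.

Local Notation zlim := (limn z).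

Lemma sqrt_iter_lim_sa : star zlim = zlim.
Proof.
have := cvg_comp _ _ cvgn_sqrt_iter (continuous_star zlim).
rewrite (_ : star \o z = z); last by apply: funext => k; exact: sqrt_iter_sa.
by move/cvg_lim_eq; apply; exact: cvgn_sqrt_iter.
Qed.

Lemma sqrt_iter_lim_fix : zlim = (2^-1 : R)%:C%C *: (y + mul zlim zlim).
Proof.
apply: (cvg_lim_eq cvgn_sqrt_iter).
rewrite -(cvg_shiftS z).
pose c := 2^-1 * (rnorm zlim + rho).
apply: (@cvg_rnorm_le _ _ _ _ _ _ _ (fun k => c * rnorm (zlim - z k))).
  rewrite -(mulr0 c); apply: cvgM (cvg_cst _) _.
  by apply/cvg_rnormP; exact: cvgn_sqrt_iter.
near=> k; rewrite /= sqrt_iterS -scalerBr opprD addrACA subrr add0r.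
rewrite rnormZ ?invr_ge0 ?ler0n // -mulrA ler_wpM2l ?invr_ge0 ?ler0n //.
apply: le_trans (rnorm_sqrB _ _) _; apply: ler_wpM2r; first exact: rnorm_ge0.
by rewrite lerD2l rnorm_sqrt_iter.
Unshelve. all: by end_near.
Qed.

Lemma one_sub_sqrt : exists2 w, star w = w & y = w + w - mul w w.
Proof.
exists zlim; first exact: sqrt_iter_lim_sa.
have := congr1 ( *:%R (2%:R : R)%:C%C) sqrt_iter_lim_fix.
rewrite scalerA -rmorphM mulfV ?pnatr_eq0 // scale1r rmorph_nat scaler_nat mulr2n.
by move=> ->; rewrite addrK.
Qed.
End OneSubSqrt.

(* With [1 - y = (1 - w)^2], take [d = c - w c]. *)
Lemma conj_one_sub (y c : A) : star y = y -> rnorm y < 1 ->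
  exists d, mul (star c) c = mul (star c) (mul y c) + mul (star d) d.
Proof.
move=> y_sa y_lt1; have [w w_sa ->] := @one_sub_sqrt y y_sa y_lt1.
exists (c - mul w c); rewrite starB starM w_sa.
rewrite !(cmulBl, cmulBr, cmulDl, cmulDr, cmulNl, cmulNr) !cmulA opprK.
set p := mul (star c) c; set q := mul (mul (star c) w) c.
set u := mul (mul (mul (star c) w) w) c.
by rewrite addrACA [- u + _]addrCA addNr addr0 addrACA subrr addr0 [q + p]addrC addrK.
Qed.

Lemma alpha_ext_sandwich {alpha : R -> A -> A} {z p q a b} :
  (forall t x y, alpha t (mul x y) = mul (alpha t x) (alpha t y)) ->
  (forall t, alpha t p = p) -> (forall t, alpha t q = q) ->
  alpha_ext alpha z a b -> alpha_ext alpha z (mul (mul p a) q) (mul (mul p b) q).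
Proof.
move=> alphaM alpha_p alpha_q [f [f_cont f_diff f_real f_z]].
pose s v := mul (mul p v) q.
have s_cont : continuous s.
  by move=> v; apply: cvg_comp (continuous_mull _ _) (continuous_mulr _ _).
exists (s \o f); split.
- by move=> w; apply: cvg_comp (f_cont w) (s_cont (f w)).
- move=> w /f_diff [L fL]; exists (s L).
  have -> : (fun h : R[i] => h^-1 *: ((s \o f) (w + h) - (s \o f) w)) =
      s \o (fun h => h^-1 *: (f (w + h) - f w)).
    by apply: funext => h; rewrite /s /= cmulZr cmulZl cmulBr cmulBl.
  exact: cvg_comp fL (s_cont L).
- by move=> t; rewrite /s /= f_real !alphaM alpha_p alpha_q.
- by rewrite /= f_z.
Qed.
End CstarAlgebra.

Section Weight.
Context {R : realType} {A : completeNormedModType R[i]}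
  {mul : A -> A -> A} {star : A -> A} {omega : A -> \bar R}.
Hypotheses (HA : Cstar_algebra mul star) (Hw : weight mul star omega)
  (Hlsc : weight_lsc mul star omega).

Local Notation pos := (pos_cone mul star).

Lemma pos_sa {x} : pos x -> star x = x.
Proof. by case=> a ->; rewrite (starM HA) (starK HA). Qed.

Lemma pos_conj x c : pos x -> pos (mul (star c) (mul x c)).
Proof. by case=> a ->; exists (mul a c); rewrite (starM HA) !(cmulA HA). Qed.

Lemma pos_scale {t : R} {x} : 0 <= t -> pos x -> pos (t%:C%C *: x).
Proof.
move=> t0 [a ->]; exists ((Num.sqrt t)%:C%C *: a).
by rewrite (starZr HA) (cmulZl HA) (cmulZr HA) scalerA -rmorphM -expr2 sqr_sqrtr.
Qed.

Lemma weight_ge0 {x} : pos x -> (0 <= omega x)%E.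
Proof. by case: Hw => h _ _; apply: h. Qed.

Lemma weightD x y : pos x -> pos y -> omega (x + y) = (omega x + omega y)%E.
Proof. by case: Hw => _ h _; apply: h. Qed.

Lemma weightZ (t : R) x : 0 <= t -> pos x -> omega (t%:C%C *: x) = (t%:E * omega x)%E.
Proof. by case: Hw => _ _ h; apply: h. Qed.

(* For [0 < t < 1], [c^* c - c^* (t y) c] is some [d^* d]; then let [t -> 1]. *)
Lemma weight_conj_le {y} c : pos y -> rnorm y <= 1 ->
  (omega (mul (star c) (mul y c)) <= omega (mul (star c) c))%E.
Proof.
move=> py y1; apply/lee_mul01Pr; first exact/weight_ge0/pos_conj.
move=> t /andP[/ltW t0 t1]; have pty := pos_scale t0 py.
have ty1 : rnorm (t%:C%C *: y) < 1.
  by rewrite rnormZ //; apply: le_lt_trans t1; exact: ler_piMr t0 y1.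
rewrite -weightZ //; last exact: pos_conj.
rewrite -(cmulZr HA) -(cmulZl HA).
have [d ->] := conj_one_sub HA _ c (pos_sa pty) ty1.
have pd : pos (mul (star d) d) by exists d.
rewrite weightD //; last exact: pos_conj.
by apply: leeDl; exact: weight_ge0.
Qed.

Lemma weight_le_of_cvg {u : nat -> A} {x} {L : \bar R} : (forall k, pos (u k)) ->
  u @ \oo --> x -> (\forall k \near \oo, (omega (u k) <= L)%E) -> (omega x <= L)%E.
Proof.
move=> pu ux; case: L => [l| |] uL; last 2 first.
- by rewrite leey.
- by case: uL => N _ /(_ N (leqnn N)) /(le_trans (weight_ge0 (pu N))).
have [] := closed_cvg _ (Hlsc l) _ x ux => //.
by apply: filterS uL => k; split.
Qed.

Lemma weight_le_of_le_cvg {u v : nat -> A} {x y : A} : (forall k, pos (u k)) -> pos y ->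
  u @ \oo --> x -> (fun k => omega (v k)) @ \oo --> omega y ->
  (forall k, (omega (u k) <= omega (v k))%E) -> (omega x <= omega y)%E.
Proof.
move=> pu py ux + uv; have := weight_ge0 py.
case: (omega y) => [l| |] // _ vy; last by rewrite leey.
apply/lee_addgt0Pr => d d0; rewrite -EFinD; apply: (weight_le_of_cvg pu ux).
have : \forall k \near \oo, (omega (v k) < (l + d)%:E)%E.
  apply: (vy [set e | (e < (l + d)%:E)%E]); apply: open_nbhs_nbhs.
  by split; [exact: open_ereal_lt_ereal | rewrite /= lte_fin ltrDl].
by apply: filterS => k /ltW; apply: le_trans (uv k).
Qed.

Section ApproximateUnit.
Context {E : nat -> A}.
Hypothesis HE : approx_identity mul star E.

Lemma E_sa n : star (E n) = E n.
Proof. by case: HE => /(_ n) /pos_sa. Qed.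

Lemma pos_EE n : pos (mul (E n) (E n)).
Proof. by exists (E n); rewrite E_sa. Qed.

Lemma rnorm_E n : rnorm (E n) <= 1.
Proof. by case: HE => _ /(_ n); rewrite rnormE -[1]/(1%:C%C) lecR. Qed.

Lemma rnorm_EE n : rnorm (mul (E n) (E n)) <= 1.
Proof.
have := rnorm_E n; have := rnorm_ge0 (E n); have := rnorm_mul HA (E n) (E n); nra.
Qed.

Lemma rnorm_E_mul_le n x : rnorm (mul (E n) x) <= rnorm x.
Proof.
apply: le_trans (rnorm_mul HA _ _) _.
by rewrite ler_piMl ?rnorm_ge0 ?rnorm_E.
Qed.

Lemma cvg_EE_mul c : (fun k => mul (mul (E k) (E k)) c) @ \oo --> c.
Proof.
case: HE => _ _ /(_ c) [/cvg_rnormP Ec _].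
apply: (@cvg_rnorm_le _ _ _ _ _ _ _ (fun k => 2 * rnorm (c - mul (E k) c))).
  by rewrite -(mulr0 2); apply: cvgM (cvg_cst _) Ec.
near=> k; rewrite -(cmulA HA).
have -> : c - mul (E k) (mul (E k) c) = (c - mul (E k) c) + mul (E k) (c - mul (E k) c).
  by rewrite (cmulBr HA) addrA subrK.
by apply: le_trans (rnormD _ _) _; rewrite mulr2n mulrDl mul1r lerD2l rnorm_E_mul_le.
Unshelve. all: by end_near.
Qed.

Lemma cvg_E_mul_E x : (fun k => mul (mul (E k) x) (E k)) @ \oo --> x.
Proof.
case: HE => _ _ /(_ x) [/cvg_rnormP Ex /cvg_rnormP xE].
apply: (@cvg_rnorm_le _ _ _ _ _ _ _
  (fun k => rnorm (x - mul (E k) x) + rnorm (x - mul x (E k)))).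
  by rewrite -(addr0 0); apply: cvgD.
near=> k.
have -> : x - mul (mul (E k) x) (E k) = (x - mul (E k) x) + mul (E k) (x - mul x (E k)).
  by rewrite (cmulBr HA) (cmulA HA) addrA subrK.
by apply: le_trans (rnormD _ _) _; rewrite lerD2l rnorm_E_mul_le.
Unshelve. all: by end_near.
Qed.

(* [omega (E_n x E_n) <= (||x|| + 1) omega (E_n^2)] by [weight_conj_le]. *)
Lemma densely_defined_of_E :
  (forall n, (omega (mul (E n) (E n)) < +oo)%E) -> densely_defined mul star omega.
Proof.
move=> Efin x px.
have cl_fin := @closed_closure _ [set x | pos x /\ (omega x < +oo)%E].
apply: (closed_cvg _ cl_fin _ x (cvg_E_mul_E x)).
apply: nearW => n; apply: subset_closure.
have pxE : pos (mul (mul (E n) x) (E n)).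
  by rewrite -(cmulA HA) -{1}E_sa; exact: pos_conj.
split=> //; pose K := rnorm x + 1.
have K0 : 0 < K by rewrite /K; have := rnorm_ge0 x; lra.
have Ki0 : 0 <= K^-1 by rewrite invr_ge0 ltW.
have pxK := pos_scale Ki0 px.
have xK1 : rnorm (K^-1%:C%C *: x) <= 1.
  by rewrite rnormZ // mulrC ler_pdivrMr // mul1r /K lerDl.
have := weight_conj_le (E n) pxK xK1.
rewrite E_sa (cmulZl HA) (cmulZr HA) (cmulA HA) weightZ //.
move=> /le_lt_trans /(_ (Efin n)); case: (omega _) => [r _| |//]; first exact: ltry.
by rewrite gt0_muley ?lte_fin ?invr_gt0.
Qed.

Lemma weight_le_of_compression (c c' : nat -> A) x y : pos y ->
  (fun n => omega (mul (star (c n)) (c n))) @ \oo --> omega x ->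
  (fun m => omega (mul (star (c' m)) (c' m))) @ \oo --> omega y ->
  (forall n m, omega (mul (star (c n)) (mul (mul (E m) (E m)) (c n))) =
               omega (mul (star (c' m)) (mul (mul (E n) (E n)) (c' m)))) ->
  (omega x <= omega y)%E.
Proof.
move=> py cx cy cc'.
apply: (closed_cvg _ (@closed_ereal_ge_ereal _ (omega y)) _ _ cx).
apply: nearW => n /=.
have := cvg_comp _ _ (cvg_EE_mul (c n)) (continuous_mull HA (star (c n)) (c n)).
move/weight_le_of_le_cvg => /(_ _ y _ py cy); apply.
- by move=> m; apply: pos_conj; exact: pos_EE.
- by move=> m; rewrite /= cc'; exact: weight_conj_le (pos_EE n) (rnorm_EE n).
Qed.

Lemma weight_conj_le_of_compression (u v : A) :
  (forall x, pos x -> (fun n => omega (mul (mul (E n) x) (E n))) @ \oo --> omega x) ->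
  (forall n m, omega (mul (mul (mul (E n) (star u)) (mul (E m) (E m))) (mul u (E n))) =
               omega (mul (mul (mul (E m) (star v)) (mul (E n) (E n))) (mul v (E m)))) ->
  (omega (mul (star u) u) <= omega (mul (star v) v))%E.
Proof.
have compress x n : mul (mul (E n) (mul (star x) x)) (E n) =
    mul (star (mul x (E n))) (mul x (E n)).
  by rewrite (starM HA) E_sa !(cmulA HA).
have compressEE x n m :
    mul (mul (mul (E n) (star x)) (mul (E m) (E m))) (mul x (E n)) =
    mul (star (mul x (E n))) (mul (mul (E m) (E m)) (mul x (E n))).
  by rewrite (starM HA) E_sa !(cmulA HA).
move=> Hlim uv; apply: (@weight_le_of_compression (fun n => mul u (E n))
  (fun m => mul v (E m))).
- by exists v.
- by under eq_fun do rewrite -compress; apply: Hlim; exists u.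
- by under eq_fun do rewrite -compress; apply: Hlim; exists v.
- by move=> n m; rewrite -!compressEE.
Qed.
End ApproximateUnit.
End Weight.

Theorem lemma4p3 (R : realType) (A : completeNormedModType R[i])
    (mul : A -> A -> A) (star : A -> A) (alpha : R -> A -> A) (beta : R)
    (E : nat -> A) (omega : A -> \bar R) :
  Cstar_algebra mul star ->
  separable A ->
  one_param_group mul star alpha ->
  approx_identity mul star E ->
  (forall t n, alpha t (E n) = E n) ->
  (forall n m, (n < m)%N -> mul (E n) (E m) = E n) ->
  weight mul star omega ->
  weight_lsc mul star omega ->
  (forall t x, pos_cone mul star x -> omega (alpha t x) = omega x) ->
  (forall n, (omega (mul (E n) (E n)) < +oo)%E) ->
  (forall x, pos_cone mul star x ->
     (fun n => omega (mul (mul (E n) x) (E n))) @ \oo --> omega x) ->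
  (KMS_weight mul star alpha beta omega <->
   (forall a b, alpha_ext alpha (- (beta / 2) *i)%C a b ->
      forall n m : nat,
        omega (mul (mul (mul (E n) (star a)) (mul (E m) (E m))) (mul a (E n))) =
        omega (mul (mul (mul (E m) b) (mul (E n) (E n))) (mul (star b) (E m))))).
Proof.
move=> HA _ [alpha_aut _ _ _] HE alphaE _ Hw Hlsc Hinv Efin Hlim.
have alphaM t x y : alpha t (mul x y) = mul (alpha t x) (alpha t y).
  by case: (alpha_aut t).
split.
- case=> _ _ Hkms a b hab n m.
  have := Hkms _ _ (alpha_ext_sandwich HA alphaM (alphaE^~ m) (alphaE^~ n) hab).
  by rewrite !(starM HA) !(E_sa HA HE) !(cmulA HA).
- move=> Hcond; split=> //; first by split=> //; exact: (densely_defined_of_E HA Hw HE Efin).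
  move=> a b hab; apply/le_anti/andP; split.
  + rewrite -{1}[b](starK HA); apply: (weight_conj_le_of_compression HA Hw Hlsc HE _ _ Hlim) => n m.
    by rewrite (starK HA); exact: Hcond.
  + rewrite -{1}[b](starK HA); apply: (weight_conj_le_of_compression HA Hw Hlsc HE _ _ Hlim) => n m.
    by rewrite (starK HA); symmetry; exact: Hcond.
Qed.
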